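(* Let $\eta\in(0,1)$ and $N_S>0$, and for $\xi\in[0,1]$ let $$I(\xi;N_S)=4N_S\left\{\frac{1-\xi}{1-2\eta^2\left(\sqrt{\xi N_S(1+\xi N_S)}-\xi N_S\right)}+\frac{\xi\left[(1-\eta^2)^2+\eta^4\right]}{(1-\eta^2)\left(1+2\xi N_S\eta^2(1-\eta^2)\right)}\right\}.$$ Then $\xi=0$ is not a maximizer of $\xi\mapsto I(\xi;N_S)$ over $[0,1]$.
   Context: $I(\xi;N_S)$ is the quantum Fisher information for estimating the transmission $\eta$ of a pure-loss (zero-temperature) bosonic channel using a single-mode pure displaced squeezed state with mean photon number $N_S$, a fraction $\xi$ of which is in squeezing and $1-\xi$ in displacement (displacement along the optimal angle); $\xi=0$ corresponds to a coherent state. *)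

From Stdlib Require Import Reals.
Open Scope R_scope.

(* Quantum Fisher information I(xi; N_S) for estimating the transmission eta
   of a pure-loss channel with a displaced squeezed probe (fraction xi in squeezing). *)
Definition QFI (eta NS xi : R) : R :=
  4 * NS *
  ( (1 - xi) / (1 - 2 * eta ^ 2 * (sqrt (xi * NS * (1 + xi * NS)) - xi * NS))
  + xi * ((1 - eta ^ 2) ^ 2 + eta ^ 4)
      / ((1 - eta ^ 2) * (1 + 2 * xi * NS * eta ^ 2 * (1 - eta ^ 2))) ).

Definition is_maximizer_on (f : R -> R) (a b x : R) : Prop :=
  a <= x <= b /\ forall y, a <= y <= b -> f y <= f x.

(* The displacement term of I is (1 - xi) / (1 - 2 eta^2 (sqrt(x (1 + x)) - x)) with x = xi N_S.
   As xi -> 0+ its numerator loses only xi, while its denominator loses a multiple of sqrt xi: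
   the square root has infinite slope at 0.  Hence for small xi > 0 the displacement term
   exceeds its value 1 at xi = 0, and since the squeezing term is nonnegative,
   I(xi; N_S) > I(0; N_S) = 4 N_S. *)

From Stdlib Require Import Reals Lra Psatz.
Open Scope R_scope.

Definition displacement_term (eta NS xi : R) : R :=
  (1 - xi) / (1 - 2 * eta ^ 2 * (sqrt (xi * NS * (1 + xi * NS)) - xi * NS)).

Definition squeezing_term (eta NS xi : R) : R :=
  xi * ((1 - eta ^ 2) ^ 2 + eta ^ 4)
    / ((1 - eta ^ 2) * (1 + 2 * xi * NS * eta ^ 2 * (1 - eta ^ 2))).

Lemma QFIE (eta NS xi : R) :
  QFI eta NS xi = 4 * NS * (displacement_term eta NS xi + squeezing_term eta NS xi).
Proof. reflexivity. Qed.

Lemma QFI_at_0 (eta NS : R) : QFI eta NS 0 = 4 * NS.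
Proof.
  rewrite QFIE; unfold displacement_term, squeezing_term.
  rewrite !Rmult_0_l, sqrt_0, !Rminus_0_r, Rmult_0_r, Rminus_0_r, Rdiv_0_l, Rdiv_1_r.
  ring.
Qed.

Lemma squeezing_term_ge0 (eta NS xi : R) :
  0 < eta < 1 -> 0 <= NS -> 0 <= xi -> 0 <= squeezing_term eta NS xi.
Proof.
  intros [eta_gt0 eta_lt1] NS_ge0 xi_ge0; unfold squeezing_term.
  assert (eta2_lt1 : 0 < eta ^ 2 < 1) by (split; nra).
  assert (0 <= xi * NS * eta ^ 2) by (apply Rmult_le_pos; nra).
  apply Rle_mult_inv_pos.
  - apply Rmult_le_pos; [exact xi_ge0 |].
    apply Rplus_le_le_0_compat; [apply pow2_ge_0 | apply pow_le; lra].
  - apply Rmult_lt_0_compat; nra.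
Qed.

Lemma sqrt_le_sqrt_mul_1_add (x : R) : 0 <= x -> sqrt x <= sqrt (x * (1 + x)).
Proof. intros x_ge0; apply sqrt_le_1_alt; nra. Qed.

Lemma sqrt_mul_1_add_lt (x : R) : 0 <= x -> sqrt (x * (1 + x)) < x + 1 / 2.
Proof.
  intros x_ge0.
  assert (sq : sqrt (x * (1 + x)) ^ 2 = x * (1 + x)) by (apply pow2_sqrt; nra).
  pose proof (sqrt_pos (x * (1 + x))); nra.
Qed.

(* With xi = t^2 / N_S the condition on t says 2 eta^2 N_S (t - t^2) > t^2 = xi N_S,
   i.e. the denominator drops by more than the numerator. *)
Lemma one_lt_displacement_term (eta NS t : R) :
  0 < eta < 1 -> 0 < NS -> 0 < t -> (1 + 2 * eta ^ 2 * NS) * t < 2 * eta ^ 2 * NS ->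
  1 < displacement_term eta NS (t ^ 2 / NS).
Proof.
  intros [eta_gt0 eta_lt1] NS_gt0 t_gt0 t_small; unfold displacement_term.
  replace (t ^ 2 / NS * NS) with (t ^ 2) by (field; lra).
  set (s := sqrt (t ^ 2 * (1 + t ^ 2))).
  assert (s_ge_t : t <= s).
  { rewrite <- (sqrt_pow2 t) at 1 by lra; apply sqrt_le_sqrt_mul_1_add; nra. }
  assert (s_lt : s < t ^ 2 + 1 / 2) by (apply sqrt_mul_1_add_lt; nra).
  assert (eta2_lt1 : 0 < eta ^ 2 < 1) by (split; nra).
  set (denom := 1 - 2 * eta ^ 2 * (s - t ^ 2)).
  assert (denom_gt0 : 0 < denom) by (unfold denom; nra).
  assert (slope : t ^ 2 < 2 * eta ^ 2 * NS * (t - t ^ 2)) by nra.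
  assert (0 <= eta ^ 2 * NS * (s - t)) by (apply Rmult_le_pos; nra).
  assert (denom_lt_numer : denom < 1 - t ^ 2 / NS).
  { apply (Rmult_lt_reg_r NS); [lra |].
    replace ((1 - t ^ 2 / NS) * NS) with (NS - t ^ 2) by (field; lra).
    unfold denom; nra. }
  apply (Rmult_lt_reg_r denom); [exact denom_gt0 |].
  replace ((1 - t ^ 2 / NS) / denom * denom) with (1 - t ^ 2 / NS) by (field; lra).
  lra.
Qed.

Theorem proposition2 (eta NS : R) :
  0 < eta < 1 -> 0 < NS ->
  ~ is_maximizer_on (QFI eta NS) 0 1 0.
Proof.
  intros eta_bounds NS_gt0 [_ is_max].
  assert (eta2_lt1 : 0 < eta ^ 2 < 1) by (split; nra).
  set (a := eta ^ 2 * NS).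
  assert (a_bounds : 0 < a < NS) by (unfold a; split; nra).
  set (t := a / (1 + 2 * a)).
  assert (t_def : t * (1 + 2 * a) = a) by (unfold t; field; lra).
  assert (t_gt0 : 0 < t) by (unfold t; apply Rdiv_lt_0_compat; lra).
  assert (t_lt : t < 1 / 2) by nra.
  set (xi := t ^ 2 / NS).
  assert (xi_bounds : 0 <= xi <= 1).
  { unfold xi; split.
    - apply Rle_mult_inv_pos; nra.
    - apply (Rmult_le_reg_r NS); [lra |].
      replace (t ^ 2 / NS * NS) with (t ^ 2) by (field; lra); nra. }
  specialize (is_max xi xi_bounds).
  rewrite QFI_at_0, QFIE in is_max.
  assert (disp_gt1 : 1 < displacement_term eta NS xi).
  { apply one_lt_displacement_term; unfold a in *; [exact eta_bounds | lra | lra | nra]. }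
  pose proof (squeezing_term_ge0 eta NS xi eta_bounds (Rlt_le _ _ NS_gt0) (proj1 xi_bounds)).
  nra.
Qed.
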